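(* Let $Q=P_1\oplus\dots\oplus P_n$ be an ordinal sum of finite posets and let $r:Q\to R$ be a retraction. If $r[P_i]\not\subseteq P_i$ for some $i\in[1,n]$, then $R$ has the fixed point property.
   Context: The ordinal sum $P_1\oplus\dots\oplus P_n$ of pairwise disjoint posets has carrier $\bigcup_i P_i$, with $x\preceq y$ iff ($x,y\in P_i$ and $x\le_i y$) or ($x\in P_i$, $y\in P_j$, $i<j$). A retraction $r:Q\to R$ is an idempotent order-preserving map $Q\to Q$ with image $R$ (an induced subposet). A poset has the fixed point property if every order-preserving self-map has a fixed point. *)

From mathcomp Require Import all_boot all_order.
Set Implicit Arguments. Unset Strict Implicit. Unset Printing Implicit Defensive.
Import Order.Theory.
Local Open Scope order_scope.

(* A finite poset Q (carrier T : finPOrderType) is the ordinal sum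
   P_0 (+) ... (+) P_{n-1} of its blocks P_i = [set x | blk x == i]
   (each P_i carrying the induced order): x <= y iff
   (x, y lie in the same block and x <= y there) or the block of x
   comes strictly before the block of y. *)
Definition is_ordinal_sum d (T : finPOrderType d) (n : nat) (blk : T -> 'I_n) :=
  forall x y : T, (x <= y) <-> ((blk x == blk y) && (x <= y) \/ (blk x < blk y)%N).

Definition block d (T : finPOrderType d) (n : nat) (blk : T -> 'I_n) (i : 'I_n)
  : {set T} := [set x | blk x == i].

(* r : Q -> Q is a retraction: order-preserving and idempotent; its image
   (with the induced order) is the retract R. *)
Definition is_retraction d (T : finPOrderType d) (r : T -> T) :=
  {homo r : x y / x <= y} /\ (forall x, r (r x) = r x).

Definition fixed_point_property d (T : finPOrderType d) (R : {set T}) :=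
  forall f : T -> T, (forall x, x \in R -> f x \in R) ->
    {in R &, {homo f : x y / x <= y}} -> exists2 x, x \in R & f x = x.

(* The element [r x] of a point [x] that [r] moves out of its block is comparable
   to every element of the retract: if [r x] lies in an earlier block than [x],
   every [y] either lies in a block after that of [r x], so [r x = r (r x) <= r y],
   or in a block before that of [x], so [r y <= r x]; the other case is dual.
   A finite poset with an element [a] comparable to all others has the fixed point
   property: [a <= f a] or [f a <= a], and a maximal [y] with [y <= f y] (resp.
   a minimal [y] with [f y <= y]) is a fixed point. *)

From mathcomp Require Import all_boot all_order.
Set Implicit Arguments. Unset Strict Implicit. Unset Printing Implicit Defensive.
Import Order.Theory.
Local Open Scope order_scope.

Lemma fixed_point_above d (T : finPOrderType d) (R : {set T}) (f : T -> T) (a : T) :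
  a \in R -> (forall x, x \in R -> f x \in R) ->
  {in R &, {homo f : x y / x <= y}} -> a <= f a ->
  exists2 x, x \in R & f x = x.
Proof.
move=> aR fR f_homo a_le_fa.
pose S := [pred y | (y \in R) && (y <= f y)].
have aS : a \in S by rewrite inE aR a_le_fa.
(* a [y] in [S] with the largest down-set is maximal in [S] *)
have [y /andP [yR y_le_fy] y_max] :=
  @arg_maxnP T a S (fun y => #|[set z : T | z <= y]|) aS.
have fyS : f y \in S by rewrite inE fR // f_homo // fR.
have down_sub : [set z : T | z <= y] \subset [set z : T | z <= f y].
  by apply/subsetP => z; rewrite !inE => /le_trans; apply.
have down_eq : [set z : T | z <= y] = [set z : T | z <= f y].
  by apply/eqP; rewrite eqEcard down_sub; exact: y_max.
have : f y \in [set z : T | z <= y] by rewrite down_eq inE.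
by rewrite inE => fy_le_y; exists y => //; apply/le_anti; rewrite fy_le_y.
Qed.

Lemma fixed_point_below d (T : finPOrderType d) (R : {set T}) (f : T -> T) (a : T) :
  a \in R -> (forall x, x \in R -> f x \in R) ->
  {in R &, {homo f : x y / x <= y}} -> f a <= a ->
  exists2 x, x \in R & f x = x.
Proof.
move=> aR fR f_homo fa_le_a.
by apply: (@fixed_point_above _ T^d R f a) => // x y xR yR; apply: f_homo.
Qed.

Lemma comparable_fixed_point_property d (T : finPOrderType d) (R : {set T}) (a : T) :
  a \in R -> {in R, forall y, a >=< y} -> fixed_point_property R.
Proof.
move=> aR a_cmp f fR f_homo.
have /orP [a_le_fa | fa_le_a] := a_cmp _ (fR _ aR).
- exact: fixed_point_above aR fR f_homo a_le_fa.
- exact: fixed_point_below aR fR f_homo fa_le_a.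
Qed.

Section OrdinalSumRetract.
Variables (d : Order.disp_t) (T : finPOrderType d) (n : nat) (blk : T -> 'I_n).
Hypothesis sumQ : is_ordinal_sum blk.

Lemma ordinal_sum_le_blk (x y : T) : (blk x < blk y)%N -> x <= y.
Proof. by move=> lt_xy; apply/sumQ; right. Qed.

Lemma retract_escaped_comparable (r : T -> T) (x : T) :
  is_retraction r -> blk (r x) != blk x -> forall y, r x >=< r y.
Proof.
move=> [r_homo r_idem] rx_moved y.
have [rx_before | rx_after | /val_inj rx_same] := ltngtP (blk (r x)) (blk x).
- have [rx_lt_y | y_le_rx] := ltnP (blk (r x)) (blk y).
    by rewrite -r_idem; apply/orP; left; apply/r_homo/ordinal_sum_le_blk.
  apply/orP; right; apply/r_homo/ordinal_sum_le_blk.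
  exact: leq_ltn_trans y_le_rx rx_before.
- have [y_lt_rx | rx_le_y] := ltnP (blk y) (blk (r x)).
    by rewrite -r_idem; apply/orP; right; apply/r_homo/ordinal_sum_le_blk.
  apply/orP; left; apply/r_homo/ordinal_sum_le_blk.
  exact: leq_trans rx_after rx_le_y.
- by rewrite rx_same eqxx in rx_moved.
Qed.

End OrdinalSumRetract.

Theorem lemma2p1 (d : Order.disp_t) (T : finPOrderType d) (n : nat) (blk : T -> 'I_n) (r : T -> T) :
  is_ordinal_sum blk -> is_retraction r ->
  (exists i : 'I_n, ~~ (r @: block blk i \subset block blk i)) ->
  fixed_point_property (r @: [set: T]).
Proof.
move=> sumQ retr [i /subsetPn [_ /imsetP [x xi ->]]].
rewrite !inE in xi * => rx_out.
have rx_moved : blk (r x) != blk x by rewrite (eqP xi).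
apply: (@comparable_fixed_point_property _ _ _ (r x)); first exact: imset_f.
move=> _ /imsetP [y _ ->].
exact: retract_escaped_comparable.
Qed.
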